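(* Let $P,R$ be real constants, and let $\Omega_1,\Omega_3\in\mathbb{R}$. Work in the layer $D=\{(x,y,z):x,y\in\mathbb{R},\ -\tfrac12<z<\tfrac12\}$. Suppose $\mathbf v(x,y,z,t)=(v_x,v_y,v_z)$, $\theta(x,y,z,t)$ and $p(x,y,z,t)$ are smooth and satisfy $$\frac{\partial\mathbf v}{\partial t}=\mathbf v\times(\nabla\times\mathbf v)+P\,\mathbf v\times\boldsymbol\Omega+P\Delta\mathbf v+PR\,\theta\,\mathbf e_z-\nabla p,\qquad \frac{\partial\theta}{\partial t}=-(\mathbf v\cdot\nabla)\theta+v_z+\Delta\theta,\qquad \nabla\cdot\mathbf v=0$$ in $D$ with $\boldsymbol\Omega=(\Omega_1,0,\Omega_3)$, and suppose that $\mathbf v$ and $\theta$ depend only on $x$, $z$ (and $t$), not on $y$. Then for every $\Omega_2\in\mathbb{R}$ there is a modified pressure $\hat p$ such that $(\mathbf v,\theta,\hat p)$ satisfies the same three equations with $\boldsymbol\Omega=(\Omega_1,\Omega_2,\Omega_3)$.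
   Context: $\mathbf e_z=(0,0,1)$; $x,y$ are horizontal and $z$ vertical Cartesian coordinates. These are the dimensionless Boussinesq convection equations in a layer rotating with angular velocity $\boldsymbol\Omega$, with $P$ the Prandtl number and $R$ the Rayleigh number. No boundary conditions are imposed. *)

From Stdlib Require Import Reals List.
From Coquelicot Require Import Coquelicot.
Open Scope R_scope.

(* A scalar field of (x, y, z, t). *)
Definition field4 := R -> R -> R -> R -> R.

(* Partial derivatives (Coquelicot's total Derive). *)
Definition dx (f : field4) : field4 := fun x y z t => Derive (fun s => f s y z t) x.
Definition dy (f : field4) : field4 := fun x y z t => Derive (fun s => f x s z t) y.
Definition dz (f : field4) : field4 := fun x y z t => Derive (fun s => f x y s t) z.
Definition dt (f : field4) : field4 := fun x y z t => Derive (fun s => f x y z s) t.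

Definition pd (i : nat) (f : field4) : field4 :=
  match i with 0 => dx f | 1 => dy f | 2 => dz f | _ => dt f end.

Definition ex_pd (i : nat) (f : field4) (x y z t : R) : Prop :=
  match i with
  | 0 => ex_derive (fun s => f s y z t) x
  | 1 => ex_derive (fun s => f x s z t) y
  | 2 => ex_derive (fun s => f x y s t) z
  | _ => ex_derive (fun s => f x y z s) t
  end.

Definition iter_pd (l : list nat) (f : field4) : field4 := fold_right pd f l.

Definition cont4 (f : field4) (x y z t : R) : Prop :=
  forall eps : R, 0 < eps -> exists delta : R, 0 < delta /\
    forall x' y' z' t' : R,
      Rabs (x' - x) < delta -> Rabs (y' - y) < delta ->
      Rabs (z' - z) < delta -> Rabs (t' - t) < delta ->
      Rabs (f x' y' z' t' - f x y z t) < eps.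

Definition in_layer (z : R) : Prop := - (1/2) < z < 1/2.

Definition smooth_layer (f : field4) : Prop :=
  forall (l : list nat) (x y z t : R), in_layer z ->
    cont4 (iter_pd l f) x y z t /\
    (forall i : nat, (i < 4)%nat -> ex_pd i (iter_pd l f) x y z t).

Definition lap (f : field4) : field4 :=
  fun x y z t => dx (dx f) x y z t + dy (dy f) x y z t + dz (dz f) x y z t.

(* The rotating Boussinesq equations in D, with v = (vx,vy,vz),
   Omega = (O1,O2,O3), written componentwise:
     dv/dt = v x (curl v) + P v x Omega + P Lap v + P R theta e_z - grad p
     dtheta/dt = -(v . grad) theta + v_z + Lap theta
     div v = 0. *)
Definition boussinesq (P Ra O1 O2 O3 : R) (vx vy vz th p : field4) : Prop :=
  forall x y z t : R, in_layer z ->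
    let wx := dy vz x y z t - dz vy x y z t in
    let wy := dz vx x y z t - dx vz x y z t in
    let wz := dx vy x y z t - dy vx x y z t in
    let ux := vx x y z t in
    let uy := vy x y z t in
    let uz := vz x y z t in
    dt vx x y z t = (uy * wz - uz * wy) + P * (uy * O3 - uz * O2)
                    + P * lap vx x y z t - dx p x y z t /\
    dt vy x y z t = (uz * wx - ux * wz) + P * (uz * O1 - ux * O3)
                    + P * lap vy x y z t - dy p x y z t /\
    dt vz x y z t = (ux * wy - uy * wx) + P * (ux * O2 - uy * O1)
                    + P * lap vz x y z t + P * Ra * th x y z t - dz p x y z t /\
    dt th x y z t = - (ux * dx th x y z t + uy * dy th x y z t + uz * dz th x y z t)
                    + uz + lap th x y z t /\
    dx vx x y z t + dy vy x y z t + dz vz x y z t = 0.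

Definition indep_y (f : field4) : Prop :=
  forall x y y' z t : R, in_layer z -> f x y z t = f x y' z t.

From Stdlib Require Import Reals Lra Lia.
From Coquelicot Require Import Coquelicot.
Open Scope R_scope.

(* For y-independent fields the continuity equation reduces to
   [dx vx + dz vz = 0], so (vx, vz) has the stream function
   [Phi x z = int_0^z vx(0, s) ds - int_0^x vz(s, z) ds], with [dx Phi = - vz]
   and, by the divergence condition, [dz Phi = vx].  The extra Coriolis term
   [P v x (0, O2, 0) = P O2 (- vz, 0, vx)] is then the gradient of [P O2 Phi]
   and is absorbed into the pressure. *)

Lemma locally_of_dist (x : R) (Q : R -> Prop) (d : R) :
  0 < d -> (forall y, Rabs (y - x) < d -> Q y) -> locally x Q.
Proof. intros Hd HQ. exists (mkposreal d Hd). intros y Hy. now apply HQ. Qed.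

Lemma continuous_of_dist (f : R -> R) (x : R) :
  (forall eps, 0 < eps -> exists d, 0 < d /\
     forall y, Rabs (y - x) < d -> Rabs (f y - f x) < eps) ->
  continuous f x.
Proof.
  intros Hf. apply filterlim_locally. intros eps.
  destruct (Hf eps (cond_pos eps)) as [d [Hd Hy]].
  now apply (locally_of_dist _ _ d Hd).
Qed.

Lemma in_layer_open (z : R) :
  in_layer z -> exists d, 0 < d /\ forall z', Rabs (z' - z) < d -> in_layer z'.
Proof.
  unfold in_layer; intros Hz. exists (Rmin (z + 1/2) (1/2 - z)). split.
  - apply Rmin_glb_lt; lra.
  - intros z' H. apply Rabs_def2 in H.
    pose proof (Rmin_l (z + 1/2) (1/2 - z)). pose proof (Rmin_r (z + 1/2) (1/2 - z)).
    lra.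
Qed.

Lemma in_layer_between (a b w : R) :
  in_layer a -> in_layer b -> Rmin a b <= w <= Rmax a b -> in_layer w.
Proof. unfold in_layer, Rmin, Rmax. destruct (Rle_dec a b); lra. Qed.

Lemma in_layer_0 : in_layer 0.
Proof. unfold in_layer; lra. Qed.

Lemma cont4_continuous_x (f : field4) (x y z t : R) :
  cont4 f x y z t -> continuous (fun s => f s y z t) x.
Proof.
  intros Hf. apply continuous_of_dist. intros eps He.
  destruct (Hf eps He) as [d [Hd H]]. exists d. split; [exact Hd|].
  intros s Hs. apply H; rewrite ?Rminus_eq_0, ?Rabs_R0; auto.
Qed.

Lemma cont4_continuous_z (f : field4) (x y z t : R) :
  cont4 f x y z t -> continuous (fun s => f x y s t) z.
Proof.
  intros Hf. apply continuous_of_dist. intros eps He.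
  destruct (Hf eps He) as [d [Hd H]]. exists d. split; [exact Hd|].
  intros s Hs. apply H; rewrite ?Rminus_eq_0, ?Rabs_R0; auto.
Qed.

Lemma cont4_continuity_2d_zx (f : field4) (x y z t : R) :
  cont4 f x y z t -> continuity_2d_pt (fun u v => f v y u t) z x.
Proof.
  intros Hf eps. destruct (Hf eps (cond_pos eps)) as [d [Hd H]].
  exists (mkposreal d Hd). intros u v Hu Hv.
  apply H; rewrite ?Rminus_eq_0, ?Rabs_R0; auto.
Qed.

Lemma smooth_layer_cont4 (f : field4) (l : list nat) (x y z t : R) :
  smooth_layer f -> in_layer z -> cont4 (iter_pd l f) x y z t.
Proof. intros Hf Hz. exact (proj1 (Hf l x y z t Hz)). Qed.

Lemma smooth_layer_ex_pd (f : field4) (i : nat) (x y z t : R) :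
  smooth_layer f -> in_layer z -> (i < 4)%nat -> ex_pd i f x y z t.
Proof. intros Hf Hz Hi. exact (proj2 (Hf nil x y z t Hz) i Hi). Qed.

Lemma indep_y_dy (f : field4) (x y z t : R) :
  indep_y f -> in_layer z -> dy f x y z t = 0.
Proof.
  intros Hf Hz. unfold dy. rewrite (Derive_ext _ (fun _ => f x y z t)).
  - apply Derive_const.
  - intros s. now apply Hf.
Qed.

Section StreamFunction.

Variables vx vz : field4.
Hypotheses (Hvx : smooth_layer vx) (Hvz : smooth_layer vz)
  (Hdiv : forall x z t, in_layer z -> dx vx x 0 z t + dz vz x 0 z t = 0).

Definition stream (x z t : R) : R :=
  RInt (fun s => vx 0 0 s t) 0 z - RInt (fun s => vz s 0 z t) 0 x.

Lemma is_derive_stream_x (x z t : R) :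
  in_layer z -> is_derive (fun s => stream s z t) x (- vz x 0 z t).
Proof.
  intros Hz. unfold stream.
  assert (Hcont : forall w, continuous (fun s => vz s 0 z t) w)
    by (intros w; exact (cont4_continuous_x _ _ _ _ _ (smooth_layer_cont4 vz nil w 0 z t Hvz Hz))).
  replace (- vz x 0 z t) with (0 - vz x 0 z t) by ring.
  apply (is_derive_minus (fun _ => RInt (fun s => vx 0 0 s t) 0 z)
                         (fun s => RInt (fun w => vz w 0 z t) 0 s)).
  - exact (is_derive_const (K := R_AbsRing) (V := R_NormedModule) _ x).
  - apply (is_derive_RInt (fun w => vz w 0 z t) (RInt (fun w => vz w 0 z t) 0) 0); [|apply Hcont].
    apply (locally_of_dist _ _ 1); [lra|]. intros b _.
    apply (RInt_correct (V := R_CompleteNormedModule)).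
    apply (ex_RInt_continuous (V := R_CompleteNormedModule)). intros w _. apply Hcont.
Qed.

Lemma RInt_dz_vz (x z t : R) :
  in_layer z -> RInt (fun s => dz vz s 0 z t) 0 x = vx 0 0 z t - vx x 0 z t.
Proof.
  intros Hz.
  assert (Hcont : forall w, continuous (Derive (fun s => vx s 0 z t)) w)
    by (intros w;
        exact (cont4_continuous_x _ _ _ _ _ (smooth_layer_cont4 vx (0%nat :: nil) w 0 z t Hvx Hz))).
  transitivity (RInt (fun s => - Derive (fun u => vx u 0 z t) s) 0 x).
  { apply RInt_ext. intros w _. specialize (Hdiv w z t Hz). unfold dx in Hdiv. lra. }
  rewrite (RInt_opp (V := R_CompleteNormedModule)).
  - rewrite RInt_Derive.
    + exact (Ropp_minus_distr _ _).
    + intros w _. apply (smooth_layer_ex_pd vx 0); [exact Hvx | exact Hz | lia].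
    + intros w _. apply Hcont.
  - apply (ex_RInt_continuous (V := R_CompleteNormedModule)). intros w _. apply Hcont.
Qed.

Lemma is_derive_stream_z (x z t : R) :
  in_layer z -> is_derive (fun u => stream x u t) z (vx x 0 z t).
Proof.
  intros Hz. unfold stream.
  destruct (in_layer_open z Hz) as [d [Hd Hnear]].
  replace (vx x 0 z t) with (vx 0 0 z t - RInt (fun s => dz vz s 0 z t) 0 x)
    by (rewrite RInt_dz_vz by exact Hz; ring).
  apply (is_derive_minus (fun u => RInt (fun s => vx 0 0 s t) 0 u)
                         (fun u => RInt (fun s => vz s 0 u t) 0 x)).
  - apply (is_derive_RInt (fun s => vx 0 0 s t) (RInt (fun s => vx 0 0 s t) 0) 0).
    + apply (locally_of_dist _ _ d Hd). intros b Hb.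
      apply (RInt_correct (V := R_CompleteNormedModule)).
      apply (ex_RInt_continuous (V := R_CompleteNormedModule)). intros w Hw.
      apply (cont4_continuous_z (iter_pd nil vx)), smooth_layer_cont4; [exact Hvx|].
      exact (in_layer_between 0 b w in_layer_0 (Hnear b Hb) Hw).
    + exact (cont4_continuous_z _ _ _ _ _ (smooth_layer_cont4 vx nil 0 0 z t Hvx Hz)).
  - apply (is_derive_RInt_param (fun u s => vz s 0 u t)).
    + apply (locally_of_dist _ _ d Hd). intros u Hu s _.
      apply (smooth_layer_ex_pd vz 2); [exact Hvz | exact (Hnear u Hu) | lia].
    + intros s _.
      exact (cont4_continuity_2d_zx _ _ _ _ _ (smooth_layer_cont4 vz (2%nat :: nil) s 0 z t Hvz Hz)).
    + apply (locally_of_dist _ _ d Hd). intros u Hu.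
      apply (ex_RInt_continuous (V := R_CompleteNormedModule)). intros w _.
      exact (cont4_continuous_x _ _ _ _ _ (smooth_layer_cont4 vz nil w 0 u t Hvz (Hnear u Hu))).
Qed.

Variables (p : field4) (c : R).
Hypotheses (Hp : smooth_layer p) (Ivx : indep_y vx) (Ivz : indep_y vz).

Definition modified_pressure : field4 :=
  fun x y z t => p x y z t + c * stream x z t.

Lemma is_derive_modified_pressure (x y z t : R) : in_layer z ->
  is_derive (fun s => modified_pressure s y z t) x (dx p x y z t - c * vz x y z t) /\
  is_derive (fun s => modified_pressure x s z t) y (dy p x y z t) /\
  is_derive (fun s => modified_pressure x y s t) z (dz p x y z t + c * vx x y z t).
Proof.
  intros Hz. unfold modified_pressure.
  rewrite (Ivx x y 0 z t Hz), (Ivz x y 0 z t Hz).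
  replace (dx p x y z t - c * vz x 0 z t) with (dx p x y z t + c * - vz x 0 z t) by ring.
  replace (dy p x y z t) with (dy p x y z t + c * 0) by ring.
  split; [|split]; apply (is_derive_plus (K := R_AbsRing) (V := R_NormedModule));
    try apply is_derive_scal.
  - apply Derive_correct, (smooth_layer_ex_pd p 0); [exact Hp | exact Hz | lia].
  - now apply is_derive_stream_x.
  - apply Derive_correct, (smooth_layer_ex_pd p 1); [exact Hp | exact Hz | lia].
  - exact (is_derive_const (K := R_AbsRing) (V := R_NormedModule) _ y).
  - apply Derive_correct, (smooth_layer_ex_pd p 2); [exact Hp | exact Hz | lia].
  - now apply is_derive_stream_z.
Qed.

End StreamFunction.

Lemma boussinesq_change_pressure (P Ra O1 O2 O2' O3 : R) (vx vy vz th p q : field4) :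
  (forall x y z t, in_layer z ->
     dx q x y z t = dx p x y z t - P * (O2' - O2) * vz x y z t /\
     dy q x y z t = dy p x y z t /\
     dz q x y z t = dz p x y z t + P * (O2' - O2) * vx x y z t) ->
  boussinesq P Ra O1 O2 O3 vx vy vz th p -> boussinesq P Ra O1 O2' O3 vx vy vz th q.
Proof.
  intros Hq Hb x y z t Hz. cbv zeta.
  destruct (Hq x y z t Hz) as [Dx [Dy Dz]].
  destruct (Hb x y z t Hz) as [Ex [Ey [Ez [Eth Ediv]]]].
  rewrite Dx, Dy, Dz, Ex, Ey, Ez.
  repeat split; first [ring | assumption].
Qed.

Theorem theorem1 (P Ra O1 O3 : R) (vx vy vz th p : field4) :
  smooth_layer vx -> smooth_layer vy -> smooth_layer vz ->
  smooth_layer th -> smooth_layer p ->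
  boussinesq P Ra O1 0 O3 vx vy vz th p ->
  indep_y vx -> indep_y vy -> indep_y vz -> indep_y th ->
  forall O2 : R, exists phat : field4,
    (forall x y z t : R, in_layer z ->
       ex_pd 0 phat x y z t /\ ex_pd 1 phat x y z t /\ ex_pd 2 phat x y z t) /\
    boussinesq P Ra O1 O2 O3 vx vy vz th phat.
Proof.
  intros Hvx _ Hvz _ Hp Hb Ivx Ivy Ivz _ O2.
  assert (Hdiv : forall x z t, in_layer z -> dx vx x 0 z t + dz vz x 0 z t = 0).
  { intros x z t Hz. destruct (Hb x 0 z t Hz) as [_ [_ [_ [_ Ediv]]]].
    rewrite (indep_y_dy vy x 0 z t Ivy Hz) in Ediv. lra. }
  pose proof (is_derive_modified_pressure vx vz Hvx Hvz Hdiv p (P * O2) Hp Ivx Ivz) as Hq.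
  exists (modified_pressure vx vz p (P * O2)). split.
  - intros x y z t Hz. destruct (Hq x y z t Hz) as [Dx [Dy Dz]].
    repeat split; eexists; eassumption.
  - apply (boussinesq_change_pressure P Ra O1 0 O2 O3 vx vy vz th p); [|exact Hb].
    intros x y z t Hz. destruct (Hq x y z t Hz) as [Dx [Dy Dz]].
    rewrite Rminus_0_r. repeat split; now apply is_derive_unique.
Qed.
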